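(* Let $n\ge 5$ and $0\le p\le n-2$. Then every simplicial $p$-cycle $c$ (with integer coefficients) in $\Delta_n$ is homologous in $\Delta_n$ to a $p$-cycle $\tilde c$ all of whose simplices lie in $\partial(\Delta_n)$.
   Context: $\mathbb{I}_n$ is the $n$-dimensional hypercube graph on vertex set $\{0,1\}^n$ (adjacent iff differing in exactly one coordinate), with Hamming distance $d(v,w)=\#\{i: v(i)\ne w(i)\}$, $v(i)$ the $i$-th coordinate. $\Delta_n=\mathcal{VR}(\mathbb{I}_n;3)$ is the simplicial complex whose simplices are the subsets $\sigma\subseteq\{0,1\}^n$ with $d(x,y)\le 3$ for all $x,y\in\sigma$. For $i\in[n]$ and $\epsilon\in\{0,1\}$, $\mathbb{I}_n^{(i,\epsilon)}$ is the induced subgraph on $\{v: v(i)=\epsilon\}$ (isomorphic to $\mathbb{I}_{n-1}$), and $\partial(\Delta_n)=\bigcup_{i\in[n],\,\epsilon\in\{0,1\}}\mathcal{VR}(\mathbb{I}_n^{(i,\epsilon)};3)$, i.e. the subcomplex of simplices that do not cover all places (a simplex covers all places if for every $i$ it contains vertices with $i$-th coordinates $0$ and $1$). *)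

From mathcomp Require Import all_boot all_order all_algebra.
Set Implicit Arguments. Unset Strict Implicit. Unset Printing Implicit Defensive.
Import GRing.Theory Num.Theory.

Definition vert (n : nat) := {ffun 'I_n -> bool}.

(* Hamming distance (= graph distance in I_n) *)
Definition hdist n (v w : vert n) : nat := #|[set i : 'I_n | v i != w i]|.

(* p-simplices of Delta_n = VR(I_n; 3): sets of p+1 vertices of pairwise distance <= 3 *)
Definition is_simplex n (p : nat) (s : {set vert n}) : bool :=
  (#|s| == p.+1) && [forall x in s, forall y in s, hdist x y <= 3].

(* Simplices of VR(I_n^{(i,eps)};3): all vertices have i-th coordinate eps *)
Definition in_face n (s : {set vert n}) : bool :=
  [exists i : 'I_n, exists e : bool, [forall x in s, x i == e]].

(* Orientation: each simplex is oriented by the canonical (enum) order on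
   vertices, i.e. sigma = [x_0 < ... < x_p] with order given by [enum sigma]. *)
Definition chain n := {ffun {set vert n} -> int}.

Definition is_chain n (p : nat) (c : chain n) : Prop :=
  forall s, c s != 0%R -> is_simplex p s.

(* Simplicial boundary (unreduced: the empty set receives no coefficient):
   d[x_0,...,x_p] = sum_i (-1)^i [x_0,..,^x_i,..,x_p]. *)
Definition boundary n (c : chain n) : chain n :=
  [ffun t : {set vert n} =>
     if t == set0 then 0%R else
     (\sum_(s : {set vert n}) c s *
        \sum_(x in s) ((t == s :\ x)%:R * (-1) ^+ (index x (enum s))))%R].

Definition is_cycle n (p : nat) (c : chain n) : Prop :=
  is_chain p c /\ boundary c = 0%R.

Definition homologous n (p : nat) (c c' : chain n) : Prop :=
  exists d : chain n, is_chain p.+1 d /\ (c - c')%R = boundary d.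

(* A simplex of Δ_n covering all places has at least n - 1 vertices: if a is
   a vertex farthest from some vertex x0, every coordinate where a agrees with
   x0 is switched by a third vertex b, and d(a, b) <= 3 together with the
   maximality of d(x0, a) lets b switch at most one of them.  Hence for
   p < n - 2 every simplex of c lies in the boundary already.  For p = n - 2,
   each vertex y of a covering p-simplex s has a private coordinate, where all
   other vertices of s differ from y; the apex w flipping every vertex at its
   private coordinates is within distance 3 of s, and every face of w ∪ s
   other than s lies in the boundary.  So subtracting the boundary of the cone
   sum_s c(s) (w ∪ s) from c removes all covering simplices. *)

From mathcomp Require Import all_boot all_order all_algebra.
From mathcomp Require Import zify.
Import GRing.Theory Num.Theory.
Set Implicit Arguments. Unset Strict Implicit. Unset Printing Implicit Defensive.

Lemma index_filter (T : eqType) (P : pred T) (l : seq T) x :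
  P x -> index x (filter P l) = count P (take (index x l) l).
Proof.
move=> Px; elim: l => [|a l IH] //=.
have [->|nax] /= := eqVneq a x; first by rewrite Px /= eqxx.
by case: (P a); rewrite /= ?(negbTE nax) IH.
Qed.

Lemma count_setD1 (T : finType) (s : {set T}) y (l : seq T) :
  uniq l -> y \in s -> count (mem (s :\ y)) l + (y \in l) = count (mem s) l.
Proof.
move=> uniq_l ys; rewrite -(count_uniq_mem y uniq_l).
have := count_predUI (mem (s :\ y)) (pred1 y) l.
have -> : count (predI (mem (s :\ y)) (pred1 y)) l = 0.
  rewrite (eq_count (a2 := pred0)) ?count_pred0 // => z /=.
  by rewrite !inE; case: eqP; rewrite ?andbF.
rewrite addn0 => <-; apply: eq_count => z; rewrite /= !inE.
by case: eqP => [->|]; rewrite ?ys ?andbT ?andbF ?orbF.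
Qed.

Definition incidence (T : finType) (t s : {set T}) : int :=
  (\sum_(x in s) (t == s :\ x)%:R * (-1) ^+ index x (enum s))%R.

Section EnumSign.
Variable T : finType.
Implicit Types (s u : {set T}) (x y : T).
Local Notation rank x := (index x (Finite.enum T)).

Lemma index_enum_setD1 s x y : x \in s -> y \in s -> x != y ->
  index x (enum (s :\ y)) + (rank y < rank x) = index x (enum s).
Proof.
move=> xs ys nxy; have uniqT : uniq (Finite.enum T) by rewrite -enumT enum_uniq.
rewrite /enum_mem !index_filter ?inE ?xs ?andbT //.
by rewrite -(count_setD1 (take_uniq _ uniqT) ys) in_take // -enumT mem_enum.
Qed.

Lemma sign_enum_setD1C s x y : x \in s -> y \in s -> x != y ->
  ((-1) ^+ index x (enum s) * (-1) ^+ index y (enum (s :\ x)) =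
   - ((-1) ^+ index y (enum s) * (-1) ^+ index x (enum (s :\ y))) :> int)%R.
Proof.
move=> xs ys nxy; rewrite -!exprD.
have hx := index_enum_setD1 xs ys nxy.
have hy := index_enum_setD1 ys xs; rewrite eq_sym in hy; have {}hy := hy nxy.
have nrank : rank x != rank y.
  by rewrite (inj_in_eq (@index_inj _ x (Finite.enum T))) // -enumT mem_enum.
have [lt|lt|eq] := ltngtP (rank y) (rank x); last by rewrite eq eqxx in nrank.
- have -> : (index x (enum s) + index y (enum (s :\ x)) =
     (index y (enum s) + index x (enum (s :\ y))).+1)%N by lia.
  by rewrite exprS mulN1r.
- have -> : (index y (enum s) + index x (enum (s :\ y)) =
     (index x (enum s) + index y (enum (s :\ x))).+1)%N by lia.
  by rewrite exprS mulN1r opprK.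
Qed.

(* The terms of this double sum cancel in pairs: removing [x] then [y] gives
   the opposite sign to removing [y] then [x]. *)
Lemma sum_sign_incidence_setD1 s u :
  (\sum_(x in s) (-1) ^+ index x (enum s) * incidence u (s :\ x) = 0 :> int)%R.
Proof.
pose F x y : int := (if [&& x \in s, y \in s & x != y] then
  (u == s :\ x :\ y)%:R * ((-1) ^+ index x (enum s) * (-1) ^+ index y (enum (s :\ x)))
  else 0)%R.
have -> : (\sum_(x in s) (-1) ^+ index x (enum s) * incidence u (s :\ x)
           = \sum_x \sum_y F x y)%R.
  rewrite big_mkcond; apply: eq_bigr => x _; case xs: (x \in s); last first.
    by rewrite big1 // => y _; rewrite /F xs.
  rewrite mulr_sumr big_mkcond; apply: eq_bigr => y _; rewrite /F xs !inE /=.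
  by case: (y \in s); rewrite ?andbF //= andbT eq_sym; case: (x != y); rewrite // mulrCA.
have F_anti x y : F y x = (- F x y)%R.
  rewrite /F; case xs: (x \in s); case ys: (y \in s); rewrite /= ?oppr0 //.
  have [->|nxy] := eqVneq x y; first by rewrite oppr0.
  by rewrite (sign_enum_setD1C xs ys nxy) mulrN opprK !setDDl setUC.
set S := (\sum_x \sum_y F x y)%R.
suff : S = (- S)%R by lia.
rewrite {1}/S exchange_big -sumrN; apply: eq_bigr => x _.
by rewrite -sumrN; apply: eq_bigr => y _; rewrite F_anti.
Qed.

Lemma sum_incidence2 s u :
  (\sum_t incidence t s * incidence u t = 0 :> int)%R.
Proof.
rewrite -[RHS](sum_sign_incidence_setD1 s u).
under eq_bigr => t _ do rewrite [incidence t s]/incidence mulr_suml.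
rewrite exchange_big /=; apply: eq_bigr => x _.
rewrite (bigD1 (s :\ x)) //= eqxx mul1r big1 ?addr0 // => t /negbTE ->.
by rewrite !mul0r.
Qed.

End EnumSign.

Lemma boundaryE n (c : chain n) t :
  t != set0 -> boundary c t = (\sum_s c s * incidence t s)%R.
Proof. by move=> t0; rewrite ffunE (negbTE t0). Qed.

Lemma boundaryK n (c : chain n) : boundary (boundary c) = 0%R.
Proof.
apply/ffunP => u; rewrite [RHS]ffunE.
have [->|u0] := eqVneq u set0; first by rewrite ffunE eqxx.
have boundary_incidence t : (boundary c t * incidence u t
    = \sum_s c s * (incidence t s * incidence u t))%R.
  have [->|t0] := eqVneq t set0.
    by rewrite [incidence u _]/incidence big_set0 mulr0 big1 // => s _; rewrite !mulr0.
  by rewrite boundaryE // mulr_suml; apply: eq_bigr => s _; rewrite mulrA.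
rewrite boundaryE // (eq_bigr _ (fun t _ => boundary_incidence t)) exchange_big.
by rewrite big1 // => s _; rewrite -mulr_sumr sum_incidence2 mulr0.
Qed.

Lemma boundaryB n (c e : chain n) : boundary (c - e)%R = (boundary c - boundary e)%R.
Proof.
apply/ffunP => t; rewrite !ffunE; case: eqP => _; first by rewrite subrr.
by rewrite -sumrB; apply: eq_bigr => s _; rewrite !ffunE mulrBl.
Qed.

Lemma boundary0 n : boundary (0%R : chain n) = 0%R.
Proof.
apply/ffunP => t; rewrite !ffunE; case: eqP => // _.
by rewrite big1 // => s _; rewrite ffunE mul0r.
Qed.

Section Hypercube.
Variable n : nat.
Implicit Types (x y z : vert n) (s t : {set vert n}).

Definition vr_clique s : Prop := {in s &, forall x y, hdist x y <= 3}.

Lemma hdistC x y : hdist x y = hdist y x.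
Proof. by apply: eq_card => i; rewrite !inE eq_sym. Qed.

Lemma hdistxx x : hdist x x = 0.
Proof. by apply: eq_card0 => i; rewrite !inE eqxx. Qed.

Lemma simplex_clique p s : is_simplex p s -> vr_clique s.
Proof. by move=> /andP [_ /forall_inP dist_s] x y xs; apply/forall_inP: y; apply: dist_s. Qed.

Lemma in_face_set0 : 0 < n -> in_face (set0 : {set vert n}).
Proof.
move=> n_gt0; apply/existsP; exists (Ordinal n_gt0); apply/existsP; exists true.
by apply/forall_inP => x; rewrite inE.
Qed.

Lemma not_in_face_moves s x i :
  ~~ in_face s -> exists2 y, y \in s & x i != y i.
Proof.
move=> covering_s; apply/exists_inP; apply: contraR covering_s => /exists_inPn stuck.
apply/existsP; exists i; apply/existsP; exists (x i).
by apply/forall_inP => y /stuck; rewrite negbK eq_sym.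
Qed.

Definition diffset x y : {set 'I_n} := [set i | x i != y i].

(* [diffset a b] is the symmetric difference of [diffset x a] and [diffset x b]. *)
Lemma card_diffsetD_le1 x a b : hdist a b <= 3 ->
  #|diffset x b| <= #|diffset x a| -> #|diffset x b :\: diffset x a| <= 1.
Proof.
move=> dist_ab le_ba.
have : #|(diffset x b :\: diffset x a) :|: (diffset x a :\: diffset x b)| <= 3.
  apply: leq_trans dist_ab; apply: subset_leq_card; apply/subsetP => i.
  by rewrite !inE; case: (x i); case: (a i); case: (b i).
have disj : (diffset x b :\: diffset x a) :&: (diffset x a :\: diffset x b) = set0.
  by apply/setP => i; rewrite !inE; case: (x i); case: (a i); case: (b i).
rewrite cardsU disj cards0 subn0.
have := cardsID (diffset x a) (diffset x b).
have := cardsID (diffset x b) (diffset x a); rewrite setIC; lia.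
Qed.

Lemma covering_clique_card s : vr_clique s -> ~~ in_face s -> n <= #|s|.+1.
Proof.
move=> clique_s covering_s.
have [n0|n_gt0] := posnP n; first by lia.
have [x0 x0s] : exists x0, x0 \in s.
  apply/set0Pn; apply: contraNneq covering_s => ->; exact: in_face_set0.
have [a a_s a_max] : exists2 a : vert n, a \in s &
    forall b, b \in s -> #|diffset x0 b| <= #|diffset x0 a|.
  by case: (arg_maxnP (fun y => #|diffset x0 y|) x0s) => a; exists a.
set D := diffset x0 a.
have cover_outside i :
    exists b, i \in ~: D -> (b \in s :\ a :\ x0) && (i \in diffset x0 b :\: D).
  have [iD|iD] := boolP (i \in ~: D); last by exists x0 => iD'; case/negP: iD.
  have [b bs xb] := not_in_face_moves x0 i covering_s.
  exists b => _; move: iD; rewrite !inE bs xb !andbT => /negPn/eqP aix.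
  by rewrite aix eqxx andbT; apply/andP; split; apply: contraNneq xb => ->; rewrite ?aix eqxx.
have [cov cov_ok] := fin_all_exists cover_outside.
have cov_inj : {in ~: D &, injective cov}.
  move=> i j /cov_ok /andP [bs iD] /cov_ok /andP [_ jD] eq_ij.
  have b_s : cov i \in s by move: bs; rewrite !inE => /and3P [].
  have le1 := card_diffsetD_le1 (clique_s _ _ a_s b_s) (a_max _ b_s).
  by apply: (card_le1_eqP le1) => //; rewrite eq_ij.
have le_n : n <= #|D| + #|s :\ a :\ x0|.
  have := cardsC D; rewrite card_ord => eq_n; rewrite -{1}eq_n leq_add2l.
  rewrite -(card_in_imset cov_inj); apply: subset_leq_card.
  by apply/subsetP => b /imsetP [i /cov_ok /andP [bs _] ->].
apply: leq_trans le_n _.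
rewrite (cardsD1 a s) a_s (cardsD1 x0 (s :\ a)) !inE x0s andbT.
have [x0a|_] := eqVneq x0 a; last exact: leq_add (clique_s _ _ x0s a_s) (leqnn _).
have -> : #|D| = 0 by apply: eq_card0 => i; rewrite !inE x0a eqxx.
exact: leqW (leqnSn _).
Qed.

Lemma small_simplex_in_face p s : is_simplex p s -> p < n - 2 -> in_face s.
Proof.
move=> simplex_s; apply: contraTT => covering_s; rewrite -leqNgt.
have := covering_clique_card (simplex_clique simplex_s) covering_s.
by case/andP: simplex_s => /eqP -> _; lia.
Qed.

Definition private_coord s y i := [forall z in s, (z != y) ==> (z i != y i)].

(* Where no vertex is private the value of the apex is irrelevant. *)
Definition apex s : vert n :=
  [ffun i => [exists y in s, private_coord s y i && ~~ y i]].

Lemma private_coord_uniq s y y' i : 3 <= #|s| -> y \in s -> y' \in s ->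
  private_coord s y i -> private_coord s y' i -> y = y'.
Proof.
move=> s3 ys y's /forall_inP py /forall_inP py'; apply/eqP/negPn/negP => yy'.
have : 0 < #|s :\ y :\ y'|.
  by move: s3; rewrite (cardsD1 y) ys (cardsD1 y') !inE y's andbT (eq_sym y') yy'.
case/card_gt0P => z; rewrite !inE => /and3P [zy' zy zs].
move: (py z zs) (py' z zs) (py y' y's); rewrite zy zy' (eq_sym y') yy' /=.
by case: (z i); case: (y i); case: (y' i).
Qed.

Lemma apex_private s y i : 3 <= #|s| -> y \in s -> private_coord s y i ->
  apex s i = ~~ y i.
Proof.
move=> s3 ys py; rewrite ffunE; case: (boolP (y i)) => [yi|/= nyi]; last first.
  by apply/exists_inP; exists y; rewrite ?py.
apply/exists_inP => -[y' y's /andP [py' ny'i]].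
by move: ny'i; rewrite -(private_coord_uniq s3 ys y's py py') yi.
Qed.

Lemma in_face_setD1 s y :
  (forall i, ~~ private_coord s y i) -> in_face (s :\ y) -> in_face s.
Proof.
move=> no_private /existsP [i /existsP [e /forall_inP face_i]].
apply/existsP; exists i; apply/existsP; exists e; apply/forall_inP => z zs.
have [-> {z zs}|zy] := eqVneq z y; last by apply: face_i; rewrite !inE zy.
apply: contraR (no_private i) => yie; apply/forall_inP => z zs; apply/implyP => zy.
have /eqP -> : z i == e by apply: face_i; rewrite !inE zy.
by rewrite eq_sym.
Qed.

Section Apex.
Variable s : {set vert n}.
Hypotheses (clique_s : vr_clique s) (covering_s : ~~ in_face s)
  (card_s : #|s|.+1 = n) (n_ge5 : 5 <= n).

Let s3 : 3 <= #|s|. Proof. by rewrite -ltnS card_s; apply: leq_trans n_ge5. Qed.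

(* A vertex without private coordinate could be removed, leaving a covering
   clique with only [n - 2] vertices. *)
Lemma exists_private_coord y : y \in s -> exists i, private_coord s y i.
Proof.
move=> ys; apply/existsP; apply: contraT => /existsPn no_private.
have clique_sy : vr_clique (s :\ y) by apply: sub_in2 clique_s => z /setD1P [].
have := covering_clique_card clique_sy (contra (in_face_setD1 no_private) covering_s).
by rewrite -{1}card_s (cardsD1 y s) ys ltnn.
Qed.

Lemma apex_notin : apex s \notin s.
Proof.
apply/negP => ws; have [i wi] := exists_private_coord ws.
by have := apex_private s3 ws wi; case: (apex s i).
Qed.

(* The apex agrees with [y] on the private coordinates of all other vertices,
   which are [n - 2] distinct coordinates. *)
Lemma apex_dist y : y \in s -> hdist (apex s) y <= 3.
Proof.
move=> ys.
have [pc pc_ok] : exists pc : vert n -> 'I_n, {in s, forall z, private_coord s z (pc z)}.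
  have i0 : 'I_n by exists 0; apply: leq_trans n_ge5.
  suff /fin_all_exists [pc pc_ok] : forall z, exists i, z \in s -> private_coord s z i.
    by exists pc => z /pc_ok.
  move=> z; have [zs|] := boolP (z \in s); last by exists i0.
  by have [i zi] := exists_private_coord zs; exists i.
have pc_inj : {in s :\ y &, injective pc}.
  move=> z z' /setD1P [_ zs] /setD1P [_ z's] eq_pc.
  by apply: (private_coord_uniq s3 zs z's (pc_ok z zs)); rewrite eq_pc pc_ok.
have disj : [disjoint pc @: (s :\ y) & diffset (apex s) y].
  rewrite disjoints_subset; apply/subsetP => _ /imsetP [z /setD1P [zy zs] ->].
  have /forall_inP /(_ y ys) := pc_ok z zs; rewrite eq_sym zy /= !inE negbK.
  by rewrite (apex_private s3 zs (pc_ok z zs)); case: (y _); case: (z _).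
have := max_card (mem (diffset (apex s) y :|: pc @: (s :\ y))).
rewrite cardsU setIC (disjoint_setI0 disj) cards0 subn0 (card_in_imset pc_inj) card_ord.
move=> le_n; rewrite -(leq_add2r #|s :\ y|); apply: leq_trans le_n _.
by rewrite -{1}card_s (cardsD1 y s) ys add1n; apply: leqnSn.
Qed.

Lemma apex_face y : y \in s -> in_face ((apex s |: s) :\ y).
Proof.
move=> ys; have [i yi] := exists_private_coord ys.
apply/existsP; exists i; apply/existsP; exists (~~ y i); apply/forall_inP => x.
rewrite !inE => /andP [xy /orP [/eqP ->|xs]]; first by rewrite (apex_private s3 ys yi).
by have /forall_inP /(_ x xs) := yi; rewrite xy /=; case: (x i); case: (y i).
Qed.

Lemma apex_simplex : is_simplex #|s| (apex s |: s).
Proof.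
rewrite /is_simplex cardsU1 apex_notin eqxx /=.
apply/forall_inP => x /setU1P [-> | xs]; apply/forall_inP => z /setU1P [-> | zs].
- by rewrite hdistxx.
- exact: apex_dist.
- by rewrite hdistC apex_dist.
- exact: clique_s.
Qed.

End Apex.

End Hypercube.

Lemma chainB n q (c e : chain n) : is_chain q c -> is_chain q e -> is_chain q (c - e)%R.
Proof.
move=> chain_c chain_e s; rewrite !ffunE.
have [->|/chain_c //] := eqVneq (c s) 0%R.
by have [->|/chain_e //] := eqVneq (e s) 0%R; rewrite subrr eqxx.
Qed.

Lemma boundary_chain n q (e : chain n) : is_chain q.+1 e -> is_chain q (boundary e).
Proof.
move=> chain_e t; rewrite ffunE; have [->|t0] := eqVneq t set0; first by rewrite eqxx.
apply: contraNT => not_simplex; rewrite big1 // => s _.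
have [->|/chain_e simplex_s] := eqVneq (e s) 0%R; first by rewrite mul0r.
rewrite big1 ?mulr0 // => x xs; have [et|] := eqVneq t (s :\ x); last by rewrite mul0r.
case/negP: not_simplex; rewrite et.
case/andP: simplex_s => /eqP card_s /forall_inP dist_s; apply/andP; split.
  by move: (cardsD1 x s); rewrite xs card_s add1n => -[<-].
apply/forall_inP => y /setD1P [_ ys]; apply/forall_inP => z /setD1P [_ zs].
exact: (forall_inP (dist_s y ys)).
Qed.

Lemma homologous_refl n p (c : chain n) : homologous p c c.
Proof.
exists 0%R; split; first by move=> s; rewrite ffunE eqxx.
by rewrite subrr boundary0.
Qed.

Definition covering_simplex n p (s : {set vert n}) := is_simplex p s && ~~ in_face s.

Definition apex_sign n (s : {set vert n}) : int :=
  ((-1) ^+ index (apex s) (enum (apex s |: s)))%R.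

(* Each covering [p]-simplex [s] is coned off to its apex; the sign makes the
   coefficient of [s] in the boundary of the cone equal to [c s]. *)
Definition cone_filling n p (c : chain n) : chain n :=
  [ffun u => (\sum_(s | covering_simplex p s && (apex s |: s == u)) c s * apex_sign s)%R].

Section ConeFilling.
Variables (n p : nat) (c : chain n).
Hypotheses (n_ge5 : 5 <= n) (pn : p.+2 = n).
Implicit Types (s t : {set vert n}).

Lemma covering_simplexP s : covering_simplex p s ->
  [/\ vr_clique s, ~~ in_face s & #|s|.+1 = n].
Proof.
case/andP=> simplex_s ->; split=> //; first exact: simplex_clique simplex_s.
by case/andP: simplex_s => /eqP ->.
Qed.

Lemma cone_filling_chain : is_chain p.+1 (cone_filling p c).
Proof.
move=> u; rewrite ffunE.
pose coned_to s := covering_simplex p s && (apex s |: s == u).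
have [s /andP [cov_s /eqP <-] _|no_cone] := pickP coned_to.
  have [clique_s covering_s card_s] := covering_simplexP cov_s.
  have <- : #|s| = p.+1 by apply: succn_inj; rewrite card_s.
  exact: apex_simplex.
by rewrite big_pred0 ?eqxx.
Qed.

Lemma incidence_apex s t : covering_simplex p s -> ~~ in_face t ->
  incidence t (apex s |: s) = ((t == s)%:R * apex_sign s)%R.
Proof.
case/covering_simplexP => clique_s covering_s card_s not_face_t.
have apex_s := apex_notin clique_s covering_s card_s n_ge5.
rewrite /incidence (bigD1 (apex s)) ?setU11 //= setU1K // big1 ?addr0 // => x /andP [xt xw].
have xs : x \in s by case/setU1P: xt => // xa; rewrite xa eqxx in xw.
have [tx|] := eqVneq t _; last by rewrite mul0r.
by case/negP: not_face_t; rewrite tx; apply: apex_face.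
Qed.

Lemma boundary_cone_filling t : ~~ in_face t ->
  boundary (cone_filling p c) t = ((is_simplex p t)%:R * c t)%R.
Proof.
move=> not_face_t.
have t0 : t != set0 by apply: contraNneq not_face_t => ->; apply: in_face_set0; lia.
rewrite boundaryE //.
transitivity (\sum_(s | covering_simplex p s) c s * apex_sign s * incidence t (apex s |: s))%R.
  rewrite [RHS](partition_big (fun s => apex s |: s) xpredT) //=; apply: eq_bigr => u _.
  by rewrite ffunE mulr_suml; apply: eq_bigr => s /andP [_ /eqP ->].
rewrite (eq_bigr (fun s => c s * (t == s)%:R)%R) => [|s cov_s]; last first.
  by rewrite incidence_apex // mulrAC -!mulrA -expr2 sqrr_sign mulr1.
rewrite big_mkcond (bigD1 t) //= big1 ?addr0 => [|s /negbTE ts]; last first.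
  by rewrite eq_sym ts mulr0; case: ifP.
by rewrite /covering_simplex not_face_t andbT eqxx mulr1; case: ifP; rewrite ?mul1r ?mul0r.
Qed.

End ConeFilling.

Theorem mainTheorem16 (n p : nat) (c : chain n) :
  5 <= n -> p <= n - 2 -> is_cycle p c ->
  exists c' : chain n,
    [/\ is_cycle p c', homologous p c c' &
        forall s, c' s != 0%R -> in_face s].
Proof.
move=> n_ge5 le_pn [chain_c cycle_c].
have [small|large] := ltnP p (n - 2).
  exists c; split=> //; first exact: homologous_refl.
  by move=> s /chain_c /small_simplex_in_face; apply.
have pn : p.+2 = n by lia.
set d := cone_filling p c.
have chain_d : is_chain p.+1 d := cone_filling_chain n_ge5 pn.
exists (c - boundary d)%R; split.
- split; first exact: chainB chain_c (boundary_chain chain_d).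
  by rewrite boundaryB cycle_c boundaryK subrr.
- by exists d; rewrite opprB addrC subrK.
- move=> t; apply: contraR => not_face_t.
  have -> : (c - boundary d)%R t = (c t - boundary d t)%R by rewrite !ffunE.
  rewrite boundary_cone_filling //.
  by have [->|/chain_c ->] := eqVneq (c t) 0%R; rewrite ?mulr0 ?mul1r subrr.
Qed.
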